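(* Let $(k,\alpha)\in\Upsilon$, $w\in\operatorname{rext}(L_{k,\alpha})$, $\bar w\in\operatorname{rext}(w,L_{k,\alpha})$, let $x\in\Sigma_k$ be a letter that is a recurrent factor of $\bar w$, and let $t\in L^{\mathbb N,R}_{k,\alpha}$ with $\operatorname{occur}(t,x)=0$. Then there are finite words $w_1,w_2,g\in\Sigma_k^*$ such that $(w_1,w_2,x,g,t)\in\Gamma(k,\alpha)$ and $w$ is a prefix of $w_1w_2xg$.
   Context: $\Sigma_k$ is an alphabet with $k$ letters. For a nonempty finite word $r$ and a rational $\beta\ge 1$ with $\beta|r|$ an integer, the $\beta$-power $r^\beta$ is the word $rr\cdots rt$ of length $\beta|r|$, where $t$ is a prefix of $r$. For rational $\alpha\ge1$, a word is $\alpha$-power free if it has no factor that is a $\beta$-power with $\beta\ge\alpha$, and $\alpha^+$-power free if it has no factor that is a $\beta$-power with $\beta>\alpha$; ''$\alpha$'' may denote a rational number or a symbol $\alpha^+$. $L_{k,\alpha}$ is the set of finite $\alpha$-power free words over $\Sigma_k$, and $L^{\mathbb N,R}_{k,\alpha}$ the set of right infinite words over $\Sigma_k$ all of whose finite factors lie in $L_{k,\alpha}$. $\Upsilon$ is the set of pairs: $(k,\alpha)$ with $k=3$ and rational $\alpha>2$; $(k,\alpha)$ with $k>3$ and rational $\alpha\ge2$; $(k,\alpha^+)$ with $k\ge3$ and rational $\alpha\ge2$. $\operatorname{occur}(w,s)$ is the number of occurrences of a nonempty word $s$ as a factor of $w$; $s$ is recurrent in an infinite word $w$ if $\operatorname{occur}(w,s)=\infty$.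 Prefixes include the empty word and the word itself if finite. A word $w\in L$ is right extendable in $L$ if for every $n\in\mathbb N$ there is $u\in L$ with $|u|=n$ and $wu\in L$; $\operatorname{rext}(L)$ is the set of such words, and for $w\in\operatorname{rext}(L)$, $\operatorname{rext}(w,L)$ is the set of right infinite words all of whose finite prefixes lie in $L$ and which have $w$ as a prefix. For $(k,\alpha)\in\Upsilon$, $(w_1,w_2,x,g,t)\in\Gamma(k,\alpha)$ means: $w_1,w_2,g\in\Sigma_k^*$; $x\in\Sigma_k$; $w_1w_2xg\in L_{k,\alpha}$; $t\in L^{\mathbb N,R}_{k,\alpha}$; $\operatorname{occur}(t,x)=0$; $g$ is a prefix of $t$; $\operatorname{occur}(w_2xgy,xgy)=1$, where $y\in\Sigma_k$ is the letter with $gy$ a prefix of $t$; and $\operatorname{occur}(w_2,x)\ge\operatorname{occur}(w_1,x)$. *)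

From HB Require Import structures.
From mathcomp Require Import all_boot all_order all_algebra.
Set Implicit Arguments. Unset Strict Implicit. Unset Printing Implicit Defensive.
Import Order.TTheory GRing.Theory Num.Theory.

Definition word (k : nat) := seq 'I_k.
Definition iword (k : nat) := nat -> 'I_k.

(* An exponent "alpha" is either a rational alpha (plus = false)
   or the symbol alpha^+ (plus = true). *)
Record expo := Expo { ex_val : rat; ex_plus : bool }.

(* u is the beta-power r^beta: r nonempty, beta >= 1, |u| = beta |r|,
   and u = r r ... r t with t a prefix of r, i.e. u_i = r_(i mod |r|). *)
Definition is_beta_power (T : eqType) (u r : seq T) (beta : rat) : Prop :=
  [/\ (0 < size r)%N, (1 <= beta)%R,
      ((size u)%:R = beta * (size r)%:R :> rat)%R &
      forall x0 i, (i < size u)%N -> nth x0 u i = nth x0 r (i %% size r)].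

Definition power_free (T : eqType) (a : expo) (w : seq T) : Prop :=
  forall (u r : seq T) (beta : rat), infix u w -> is_beta_power u r beta ->
    if ex_plus a then (beta <= ex_val a)%R else (beta < ex_val a)%R.

Definition L (k : nat) (a : expo) (w : word k) : Prop := power_free a w.

Definition ifactor k (t : iword k) (i n : nat) : word k :=
  [seq t (i + j)%N | j <- iota 0 n].
Definition iprefix k (t : iword k) (n : nat) : word k := ifactor t 0 n.

Definition LNR (k : nat) (a : expo) (t : iword k) : Prop :=
  forall i n, L a (ifactor t i n).

Definition Upsilon (k : nat) (a : expo) : Prop :=
  [\/ (~~ ex_plus a /\ k = 3 /\ (2 < ex_val a)%R),
      (~~ ex_plus a /\ (3 < k)%N /\ (2 <= ex_val a)%R) |
      (ex_plus a /\ (3 <= k)%N /\ (2 <= ex_val a)%R)].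

Definition occur (T : eqType) (w s : seq T) : nat :=
  count (fun i => take (size s) (drop i w) == s) (iota 0 (size w)).

Definition ioccur0 k (t : iword k) (x : 'I_k) : Prop := forall i, t i != x.

Definition recurrent_letter k (t : iword k) (x : 'I_k) : Prop :=
  forall N, exists2 i, (N <= i)%N & t i = x.

Definition rext (k : nat) (a : expo) (w : word k) : Prop :=
  L a w /\ forall n, exists u : word k, [/\ L a u, size u = n & L a (w ++ u)].

Definition rext_w (k : nat) (a : expo) (w : word k) (t : iword k) : Prop :=
  (forall n, L a (iprefix t n)) /\ iprefix t (size w) = w.

Definition Gamma (k : nat) (a : expo) (w1 w2 : word k) (x : 'I_k) (g : word k)
    (t : iword k) : Prop :=
  let y := t (size g) in
  [/\ L a (w1 ++ w2 ++ x :: g), LNR a t, ioccur0 t x,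
      iprefix t (size g) = g &
      occur (w2 ++ x :: g ++ [:: y]) (x :: g ++ [:: y]) = 1%N] /\
  (occur w1 [:: x] <= occur w2 [:: x])%N.

From HB Require Import structures.
From mathcomp Require Import all_boot all_order all_algebra.
From mathcomp Require Import zify.
From Stdlib Require Import Classical.

Set Implicit Arguments.
Unset Strict Implicit.

(* Write P_j for the word x t_0 ... t_(j-1).  Since x is recurrent in wbar and
   absent from t, a fixed position of wbar stops being an occurrence of P_j once
   j is large.  If every P_j is recurrent in wbar, choose J so that P_J does not
   occur before |w|, let n be its first occurrence and take w1 empty,
   w2 = wbar[0, n).  Otherwise some recurrent P_j has P_(j+1) occurring only
   before some N; take w1 = wbar[0, m) with m >= N, |w|, and w2 = wbar[m, n) for
   an occurrence n of P_j so far beyond m that w2 contains at least as many x as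
   w1.  In both cases w1 w2 x g, with g = t_0 ... t_(j-1), is a prefix of wbar,
   and x g t_j occurs in w2 x g t_j only as a suffix. *)

Lemma occur_letter (T : eqType) (s : seq T) (x : T) : occur s [:: x] = count_mem x s.
Proof.
rewrite /occur -[in RHS](mkseq_nth x s) count_map.
apply: eq_in_count => i; rewrite mem_iota add0n => lt_i /=.
by rewrite (drop_nth x lt_i) /= eqseq_cons take0 andbT.
Qed.

Lemma occur_cat_suffix (T : eqType) (u s : seq T) :
  s != [::] -> (forall i, i < size u -> take (size s) (drop i (u ++ s)) != s) ->
  occur (u ++ s) s = 1.
Proof.
move=> s_nil early; rewrite /occur size_cat iotaD count_cat add0n.
rewrite (eq_in_count (a2 := pred0)) ?count_pred0; last first.
  by move=> i; rewrite mem_iota add0n => /early /negbTE.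
case: s s_nil {early} => // c s _ /=.
rewrite drop_size_cat //= take_size eqxx (eq_in_count (a2 := pred0)) ?count_pred0 //.
move=> i; rewrite mem_iota => /andP [lt_ui _]; apply/negbTE/eqP => /(congr1 size).
rewrite size_take_min size_drop size_cat /=; lia.
Qed.

Section InfiniteWordFactors.

Variables (k : nat) (f : iword k).

Lemma size_ifactor i n : size (ifactor f i n) = n.
Proof. by rewrite size_map size_iota. Qed.

Lemma ifactorD i m n : ifactor f i (m + n) = ifactor f i m ++ ifactor f (i + m) n.
Proof.
rewrite /ifactor iotaD map_cat add0n; congr (_ ++ _).
by rewrite -[in LHS](addn0 m) iotaDl -map_comp; apply: eq_map => j /=; rewrite addnA.
Qed.

Lemma ifactorS i n : ifactor f i n.+1 = rcons (ifactor f i n) (f (i + n)).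
Proof. by rewrite -addn1 ifactorD -cats1 /ifactor /= addn0. Qed.

Lemma iprefixS n : iprefix f n.+1 = rcons (iprefix f n) (f n).
Proof. by rewrite /iprefix ifactorS add0n. Qed.

Lemma nth_ifactor x0 i n j : j < n -> nth x0 (ifactor f i n) j = f (i + j).
Proof. by move=> lt_jn; rewrite (nth_map 0) ?size_iota // nth_iota. Qed.

Lemma take_ifactor i m n : m <= n -> take m (ifactor f i n) = ifactor f i m.
Proof. by move=> le_mn; rewrite -(subnKC le_mn) ifactorD take_size_cat ?size_ifactor. Qed.

Lemma take_drop_ifactor_cat i n e j c :
  j + c <= n -> take c (drop j (ifactor f i n ++ e)) = ifactor f (i + j) c.
Proof.
move=> le_jcn; rewrite -(subnKC le_jcn) !ifactorD -!catA.
by rewrite drop_size_cat ?size_ifactor // take_size_cat ?size_ifactor.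
Qed.

Lemma prefix_iprefix m n : m <= n -> prefix (iprefix f m) (iprefix f n).
Proof. by move=> le_mn; rewrite prefixE size_ifactor /iprefix take_ifactor. Qed.

Lemma count_ifactor_mono x i m n :
  m <= n -> count_mem x (ifactor f i m) <= count_mem x (ifactor f i n).
Proof. by move=> le_mn; rewrite -(subnKC le_mn) ifactorD count_cat leq_addr. Qed.

Lemma count_ifactor_unbounded x : recurrent_letter f x ->
  forall i c, exists n, c <= count_mem x (ifactor f i n).
Proof.
move=> x_rec i; elim=> [|c [n le_cn]]; first by exists 0.
have [p le_inp fp] := x_rec (i + n); exists (p - i).+1.
rewrite ifactorS subnKC; last by apply: leq_trans le_inp; apply: leq_addr.
rewrite -cats1 count_cat fp /= eqxx addn1 ltnS (leq_trans le_cn) //.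
by apply: count_ifactor_mono; lia.
Qed.

Definition occurs_at (s : word k) (p : nat) : bool := ifactor f p (size s) == s.

Definition recurrent_factor (s : word k) : Prop :=
  forall N, exists2 p, N <= p & occurs_at s p.

Lemma occurs_at_prefix s s' p : prefix s s' -> occurs_at s' p -> occurs_at s p.
Proof.
move=> /[dup] /size_prefix le_ss'; rewrite prefixE => /eqP <- /eqP occ.
by rewrite /occurs_at size_takel // -occ take_ifactor.
Qed.

Lemma nth_occurs_at s p j x0 : occurs_at s p -> j < size s -> f (p + j) = nth x0 s j.
Proof. by move=> /eqP occ lt_js; rewrite -occ nth_ifactor. Qed.

Lemma recurrent_letter_factor x : recurrent_letter f x -> recurrent_factor [:: x].
Proof.
move=> x_rec N; have [p le_Np fp] := x_rec N.
by exists p; rewrite // /occurs_at /ifactor /= addn0 fp.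
Qed.

End InfiniteWordFactors.

Lemma all_or_exists_break (P : nat -> Prop) :
  P 0 -> (forall j, P j) \/ exists j, P j /\ ~ P j.+1.
Proof.
move=> P0; case: (classic (forall j, P j)) => [|/not_all_ex_not [j0 nPj0]]; first by left.
right; elim: j0 nPj0 => [/(_ P0) [] | j IH nPj].
by case: (classic (P j)) => [Pj | /IH]; first by exists j.
Qed.

Section Gamma.

Variables (k : nat) (a : expo) (w : word k) (wbar t : iword k) (x : 'I_k).
Hypotheses (wbarP : rext_w a w wbar) (tP : LNR a t) (tx : ioccur0 t x)
  (x_rec : recurrent_letter wbar x).

Local Notation P j := (x :: iprefix t j).

Lemma size_P j : size (P j) = j.+1.
Proof. by rewrite /= size_ifactor. Qed.

Lemma not_occurs_at_long_P i p j :
  wbar i = x -> p < i -> i - p <= j -> ~~ occurs_at wbar (P j) p.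
Proof.
move=> wbar_i lt_pi le_ipj; apply/negP => occ.
have [d ipE] : exists d, i - p = d.+1 by exists (i - p - 1); lia.
have lt_ij : i - p < size (P j) by rewrite size_P; lia.
have := nth_occurs_at x occ lt_ij.
rewrite subnKC ?(ltnW lt_pi) // wbar_i ipE /= nth_ifactor ?add0n => [x_td|]; last by lia.
by move: (tx d); rewrite -x_td eqxx.
Qed.

Lemma exists_P_not_occurs_before q :
  exists J, forall p, p < q -> ~~ occurs_at wbar (P J) p.
Proof.
have [i le_qi wbar_i] := x_rec q.
by exists i => p lt_pq; apply: not_occurs_at_long_P wbar_i _ _; lia.
Qed.

Lemma Gamma_of_split m n j :
  m <= n -> size w <= n -> occurs_at wbar (P j) n ->
  (forall p, m <= p < n -> ~~ occurs_at wbar (P j.+1) p) ->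
  count_mem x (ifactor wbar 0 m) <= count_mem x (ifactor wbar m (n - m)) ->
  Gamma a (ifactor wbar 0 m) (ifactor wbar m (n - m)) x (iprefix t j) t /\
  prefix w (ifactor wbar 0 m ++ ifactor wbar m (n - m) ++ x :: iprefix t j).
Proof.
move=> le_mn le_wn; rewrite /occurs_at size_P => /eqP occ later count_x.
have prefE : ifactor wbar 0 m ++ ifactor wbar m (n - m) ++ P j = iprefix wbar (n + j.+1).
  have -> : n + j.+1 = m + (n - m) + j.+1 by rewrite subnKC.
  by rewrite /iprefix !ifactorD !add0n subnKC // occ catA.
have w2P : ifactor wbar m (n - m) ++ P j.+1 = rcons (ifactor wbar m (n - m + j.+1)) (t j).
  by rewrite iprefixS -rcons_cons -occ -rcons_cat ifactorD subnKC.
rewrite /Gamma /= size_ifactor; split; [split; [split=> //|] |].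
- by rewrite prefE; apply: wbarP.1.
- rewrite cats1 -iprefixS; apply: occur_cat_suffix => // i.
  rewrite size_ifactor => lt_i; rewrite w2P -cats1 take_drop_ifactor_cat.
    by apply: later; lia.
  by rewrite size_P; lia.
- by rewrite !occur_letter.
- by rewrite prefE -wbarP.2 prefix_iprefix //; lia.
Qed.

Lemma Gamma_of_all_P_recurrent : (forall j, recurrent_factor wbar (P j)) ->
  exists (w1 w2 g : word k), Gamma a w1 w2 x g t /\ prefix w (w1 ++ w2 ++ x :: g).
Proof.
move=> P_rec; have [J not_early] := exists_P_not_occurs_before (size w).
have [n0 _ occ0] := P_rec J 0.
case: (ex_minnP (ex_intro _ n0 occ0)) => n occ n_min.
exists (ifactor wbar 0 0), (ifactor wbar 0 (n - 0)), (iprefix t J).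
apply: Gamma_of_split => //.
- by rewrite leqNgt; apply/negP => /not_early; rewrite occ.
- move=> p /andP [_ lt_pn]; apply/negP => occS.
  have prefix_P : prefix (P J) (P J.+1) by rewrite prefix_cons eqxx prefix_iprefix.
  have /n_min := occurs_at_prefix prefix_P occS.
  by rewrite leqNgt lt_pn.
Qed.

Lemma Gamma_of_last_P_recurrent j :
  recurrent_factor wbar (P j) -> ~ recurrent_factor wbar (P j.+1) ->
  exists (w1 w2 g : word k), Gamma a w1 w2 x g t /\ prefix w (w1 ++ w2 ++ x :: g).
Proof.
move=> Pj_rec PSj_not_rec.
have [N late] : exists N, forall p, N <= p -> ~~ occurs_at wbar (P j.+1) p.
  apply: NNPP => no_N; apply: PSj_not_rec => N; apply: NNPP => no_occ.
  by apply: no_N; exists N => p le_Np; apply/negP => occ; apply: no_occ; exists p.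
pose m := maxn N (size w).
have [L count_L] := count_ifactor_unbounded x_rec m (count_mem x (ifactor wbar 0 m)).
have [n le_mLn occ] := Pj_rec (m + L).
exists (ifactor wbar 0 m), (ifactor wbar m (n - m)), (iprefix t j).
apply: Gamma_of_split => //; try lia.
- by move=> p /andP [le_mp _]; apply: late; lia.
- by apply: (leq_trans count_L); apply: count_ifactor_mono; lia.
Qed.

End Gamma.

Theorem mainTheorem6 (k : nat) (a : expo) (w : word k) (wbar : iword k)
    (x : 'I_k) (t : iword k) :
  Upsilon k a -> rext a w -> rext_w a w wbar -> recurrent_letter wbar x ->
  LNR a t -> ioccur0 t x ->
  exists (w1 w2 g : word k),
    Gamma a w1 w2 x g t /\ prefix w (w1 ++ w2 ++ x :: g).
Proof.
move=> _ _ wbarP x_rec tP tx.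
pose P_rec j := recurrent_factor wbar (x :: iprefix t j).
have P0_rec : P_rec 0 := recurrent_letter_factor x_rec.
case: (all_or_exists_break P0_rec) => [all_rec | [j [Pj_rec PSj_not_rec]]].
- exact: Gamma_of_all_P_recurrent wbarP tP tx x_rec all_rec.
- exact: (Gamma_of_last_P_recurrent wbarP tP tx x_rec Pj_rec PSj_not_rec).
Qed.
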